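(* For every $\epsilon>0$ there exists a distributed algorithm in the LOCAL model that, for every outerplanar graph $G$, computes in a constant number of rounds (the constant depending only on $\epsilon$) a dominating set of $G$ of size at most $(8+\epsilon)\gamma(G)$.
   Context: All graphs are finite, undirected and simple. A graph is outerplanar if it has a plane embedding in which all vertices lie on the outer face. In the LOCAL model the input graph is the communication network: each vertex is a processor with a unique identifier; in each synchronous round every vertex may send arbitrary messages to its neighbours and perform arbitrary local computation; at the end each vertex decides whether it belongs to the output set. A dominating set of $G$ is a set $D\subseteq V(G)$ such that every vertex is in $D$ or has a neighbour in $D$; $\gamma(G)$ is the minimum size of a dominating set. *)

From mathcomp Require Import all_boot.
From Stdlib Require Import Reals.
Set Implicit Arguments. Unset Strict Implicit. Unset Printing Implicit Defensive.

(* A finite graph whose vertices are identified with their (unique) natural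
   number identifiers. *)
Record graph := Graph { gV : seq nat; gE : nat -> nat -> bool }.

Definition simple_graph (G : graph) : Prop :=
  [/\ uniq (gV G),
      (forall x y, gE G x y = gE G y x),
      (forall x, gE G x x = false)
    & (forall x y, gE G x y -> (x \in gV G) && (y \in gV G))].

(* Outerplanar: the vertices can be placed in convex position (a cyclic/linear
   order s) so that all edges, drawn as straight chords, are pairwise
   non-crossing; this is a plane embedding with every vertex on the outer face. *)
Definition outerplanar (G : graph) : Prop :=
  exists s : seq nat, perm_eq s (gV G) /\
    forall a b c d, gE G a b -> gE G c d ->
      ~ [/\ index a s < index c s, index c s < index b s & index b s < index d s].

Definition dominating (G : graph) (D : seq nat) : Prop :=
  {subset D <= gV G} /\
  forall v, v \in gV G -> (v \in D) \/ exists2 u, u \in D & gE G u v.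

Definition domination_number (G : graph) (k : nat) : Prop :=
  (exists D, [/\ uniq D, dominating G D & size D = k]) /\
  (forall D, uniq D -> dominating G D -> k <= size D).

Fixpoint inball (G : graph) (r : nat) (v u : nat) : bool :=
  match r with
  | 0 => (u == v) && (v \in gV G)
  | r'.+1 => inball G r' v u || has (fun w => inball G r' v w && gE G w u) (gV G)
  end.

(* A (deterministic) distributed algorithm: every vertex v of every graph G
   decides membership in the output set A G v. *)
Definition algorithm := graph -> nat -> bool.

(* The algorithm runs in r rounds of the LOCAL model: the decision of v only
   depends on its radius-r neighbourhood (vertices with identifiers and the
   edges among them). *)
Definition local_in_rounds (r : nat) (A : algorithm) : Prop :=
  forall G G' v, simple_graph G -> simple_graph G' ->
    v \in gV G -> v \in gV G' ->
    (forall u, inball G r v u = inball G' r v u) ->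
    (forall u w, inball G r v u -> inball G r v w -> gE G u w = gE G' u w) ->
    A G v = A G' v.

Definition output (A : algorithm) (G : graph) : seq nat :=
  [seq v <- gV G | A G v].

From mathcomp Require Import all_boot.
From Stdlib Require Import Reals.
From mathcomp Require Import zify.
From Stdlib Require Import Lra.
Set Implicit Arguments. Unset Strict Implicit. Unset Printing Implicit Defensive.

(* Every vertex joins the output unless some neighbour u dominates it, i.e.
   N[v] is contained in N[u], strictly or with u < v; this takes two rounds.
   Following dominators from any vertex ends at an output vertex whose closed
   neighbourhood contains it, so the output is dominating.
   For the size bound fix a dominating set D and assign every vertex v to
   some L v in D adjacent to it.  An output vertex all of whose neighbours
   have the same L has N[v] = N[L v], and distinct output vertices have
   distinct closed neighbourhoods: there are at most |D| such vertices.  Every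
   other output vertex sits, in the outerplanar order, at an end or next to a
   change of the label L.  Each class of L is a star around its element of D,
   so non-crossing of chords forbids label patterns b..c..b..c; hence there
   are at most 2|D| label changes, and at most 4|D| + 2 such vertices.
   Altogether 5|D| + 2 <= 8|D|. *)

Lemma count_sub_predD (T : eqType) (a1 a2 : pred T) (s : seq T) :
  {in s, subpred a1 a2} -> count a2 s = count a1 s + count (predD a2 a1) s.
Proof.
elim: s => //= x s IH sub12.
rewrite IH => [|y ys]; last by apply: sub12; rewrite inE ys orbT.
by have := sub12 x (mem_head x s); case: (a1 x) => [->|_] /=; lia.
Qed.

Lemma size_leq_inj (T1 T2 : eqType) (f : T1 -> T2) (s : seq T1) (r : seq T2) :
  uniq s -> {in s &, injective f} -> {in s, forall x, f x \in r} ->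
  size s <= size r.
Proof.
move=> s_uniq f_inj f_r; rewrite -(size_map f).
apply: uniq_leq_size; first by rewrite map_inj_in_uniq.
by move=> _ /mapP[x xs ->]; apply: f_r.
Qed.

Definition label_changes (T : eqType) (f : nat -> T) (n : nat) : seq nat :=
  [seq i <- iota 0 n.-1 | f i != f i.+1].

Lemma mem_label_changes (T : eqType) (f : nat -> T) n i :
  (i \in label_changes f n) = (i.+1 < n) && (f i != f i.+1).
Proof. by rewrite mem_filter mem_iota leq0n add0n andbC; congr (_ && _); lia. Qed.

Section AlternationFree.

Variables (T : eqType) (f : nat -> T) (n : nat) (D : seq T).
Hypothesis f_in_D : forall i, i < n -> f i \in D.
Hypothesis f_noalt : forall i j k l, i < j < k -> k < l < n ->
  f i = f k -> f j = f l -> f i = f j.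

Let reappears i := has (fun q => f q == f i) (iota i.+2 (n - i.+2)).

Lemma size_final_changes :
  size [seq i <- label_changes f n | ~~ reappears i] <= size D.
Proof.
have final i i' : i \in label_changes f n -> ~~ reappears i ->
    i' \in label_changes f n -> i < i' -> f i != f i'.
  rewrite !mem_label_changes => /andP[_ fi] /hasPn final_i /andP[i'n _] lt.
  apply/eqP=> fii'; have i'i : i' != i.+1 by apply: contraNneq fi => <-; rewrite fii'.
  suff /final_i : i' \in iota i.+2 (n - i.+2) by rewrite fii' eqxx.
  by rewrite mem_iota; lia.
apply: (size_leq_inj (f := f)); rewrite ?filter_uniq ?iota_uniq //.
  move=> i i'; rewrite mem_filter => /andP[fin_i ci].
  rewrite mem_filter => /andP[fin_i' ci'] fii'.
  case: (ltngtP i i') => // lt.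
    by move: (final _ _ ci fin_i ci' lt); rewrite fii' eqxx.
  by move: (final _ _ ci' fin_i' ci lt); rewrite fii' eqxx.
move=> i; rewrite mem_filter => /andP[_]; rewrite mem_label_changes => /andP[lt _].
by apply: f_in_D; lia.
Qed.

(* Two changes i < i' into the same label c, the label b left at i' reappearing
   later, would produce the pattern c b c b. *)
Lemma size_reappearing_changes :
  size [seq i <- label_changes f n | reappears i] <= size D.
Proof.
have entry i i' : i \in label_changes f n -> i' \in label_changes f n ->
    reappears i' -> i < i' -> f i.+1 != f i'.+1.
  rewrite !mem_label_changes => /andP[_ fi] /andP[_ fi'] /hasP[q].
  rewrite mem_iota => /andP[i'q qn] /eqP fq lt; apply/eqP=> fii'.
  have i'i : i' != i.+1 by apply: contraNneq fi' => {1}->; rewrite fii'.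
  have fi'i' : f i.+1 = f i' by apply: (f_noalt _ _ fii' (esym fq)); lia.
  by rewrite -fi'i' fii' eqxx in fi'.
apply: (size_leq_inj (f := fun i => f i.+1)); rewrite ?filter_uniq ?iota_uniq //.
  move=> i i'; rewrite mem_filter => /andP[re_i ci].
  rewrite mem_filter => /andP[re_i' ci'] fii'.
  case: (ltngtP i i') => // lt.
    by move: (entry _ _ ci ci' re_i' lt); rewrite fii' eqxx.
  by move: (entry _ _ ci' ci re_i lt); rewrite fii' eqxx.
move=> i; rewrite mem_filter => /andP[_]; rewrite mem_label_changes => /andP[lt _].
exact: f_in_D.
Qed.

Lemma size_label_changes : size (label_changes f n) <= (size D).*2.
Proof.
rewrite -(count_predC reappears) -!size_filter -addnn addnC.
exact: leq_add size_final_changes size_reappearing_changes.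
Qed.

End AlternationFree.

Definition cnbhd (G : graph) (v w : nat) : bool := (w == v) || gE G v w.

Definition cnbhd_sub (G : graph) (v u : nat) : bool :=
  all (fun w => cnbhd G v w ==> cnbhd G u w) (gV G).

Definition dominates (G : graph) (u v : nat) : bool :=
  cnbhd_sub G v u && (~~ cnbhd_sub G u v || (u < v)).

Definition undominated : algorithm := fun G v =>
  (v \in gV G) && ~~ has (fun u => gE G v u && dominates G u v) (gV G).

Definition nbhd_size (G : graph) (v : nat) : nat := count (cnbhd G v) (gV G).

(* Lexicographic in (|V| - |N[v]|, v), so that dominators have smaller rank. *)
Definition dom_rank (G : graph) (v : nat) : nat :=
  (size (gV G) - nbhd_size G v) * (\max_(w <- gV G) w).+1 + v.

Lemma inball_mono (G : graph) r v u : inball G r v u -> inball G r.+1 v u.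
Proof. by move=> b /=; rewrite b. Qed.

Lemma inball_self (G : graph) r v : v \in gV G -> inball G r v v.
Proof. by move=> vV; elim: r => [|r IH] /=; rewrite ?eqxx ?vV ?IH. Qed.

Section SimpleGraph.

Variable G : graph.
Hypothesis G_simple : simple_graph G.

Lemma edge_sym x y : gE G x y = gE G y x.
Proof. by case: G_simple. Qed.

Lemma edge_irrefl x : gE G x x = false.
Proof. by case: G_simple. Qed.

Lemma edge_meml x y : gE G x y -> x \in gV G.
Proof. by case: G_simple => _ _ _ H /H /andP[]. Qed.

Lemma edge_memr x y : gE G x y -> y \in gV G.
Proof. by case: G_simple => _ _ _ H /H /andP[]. Qed.

Lemma inball_step r v w u : inball G r v w -> gE G w u -> inball G r.+1 v u.
Proof.
move=> bw e /=; apply/orP; right; apply/hasP; exists w; first exact: edge_meml e.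
by rewrite bw e.
Qed.

Lemma cnbhd_mem v w : v \in gV G -> cnbhd G v w -> w \in gV G.
Proof. by move=> vV /orP[/eqP-> //|]; apply: edge_memr. Qed.

Lemma cnbhd_subP v u : v \in gV G ->
  reflect (forall w, cnbhd G v w -> cnbhd G u w) (cnbhd_sub G v u).
Proof.
move=> vV; apply: (iffP allP) => sub w; last by move=> _; apply/implyP/sub.
by move=> vw; apply: (implyP (sub w (cnbhd_mem vV vw))).
Qed.

Lemma cnbhd_sub_edge v u : v \in gV G -> u != v -> cnbhd_sub G v u -> gE G u v.
Proof.
move=> vV uv /(cnbhd_subP _ vV)/(_ v).
by rewrite /cnbhd eqxx eq_sym (negbTE uv) /=; move/(_ isT).
Qed.

Lemma cnbhd_sub_refl v : cnbhd_sub G v v.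
Proof. by apply/allP=> w _; apply: implybb. Qed.

Lemma cnbhd_sub_trans v u w : v \in gV G -> u \in gV G ->
  cnbhd_sub G v u -> cnbhd_sub G u w -> cnbhd_sub G v w.
Proof.
move=> vV uV /(cnbhd_subP _ vV) vu /(cnbhd_subP _ uV) uw.
by apply/(cnbhd_subP _ vV) => x /vu /uw.
Qed.

Lemma undominatedP v : v \in gV G ->
  reflect (forall u, gE G v u -> ~~ dominates G u v) (undominated G v).
Proof.
move=> vV; rewrite /undominated vV; apply: (iffP hasPn) => nodom u.
  by move=> e; have := nodom u (edge_memr e); rewrite e.
by move=> _; rewrite negb_and; case e: (gE G v u); last by []; apply: nodom.
Qed.

Lemma nbhd_size_sub v u : v \in gV G -> cnbhd_sub G v u ->
  nbhd_size G v + ~~ cnbhd_sub G u v <= nbhd_size G u.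
Proof.
move=> vV /(cnbhd_subP _ vV) vu.
rewrite /nbhd_size (count_sub_predD (fun w _ => vu w)) leq_add2l.
have -> : ~~ cnbhd_sub G u v = has (predD (cnbhd G u) (cnbhd G v)) (gV G).
  by rewrite -has_predC; apply: eq_has => w /=; rewrite negb_imply andbC.
by rewrite has_count; case: count.
Qed.

Lemma dominates_rank u v : u \in gV G -> v \in gV G ->
  dominates G u v -> dom_rank G u < dom_rank G v.
Proof.
move=> uV vV /andP[vu strict]; rewrite /dom_rank.
have u_lt : u < (\max_(w <- gV G) w).+1 by rewrite ltnS leq_bigmax_seq.
have v_lt : v < (\max_(w <- gV G) w).+1 by rewrite ltnS leq_bigmax_seq.
have := nbhd_size_sub vV vu; have := count_size (cnbhd G u) (gV G).
rewrite -/(nbhd_size G u); move: strict; case uv: (cnbhd_sub G u v) => /= strict.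
  have := nbhd_size_sub uV uv; rewrite vu /= !addn0 => le_uv le_u le_vu.
  have -> : nbhd_size G u = nbhd_size G v by lia.
  lia.
nia.
Qed.

Lemma undominated_covers v : v \in gV G ->
  exists2 z, undominated G z & cnbhd G z v.
Proof.
move=> vV.
suff cover m u : dom_rank G u < m -> u \in gV G -> cnbhd_sub G v u ->
    exists2 z, undominated G z & cnbhd G z v.
  exact: (cover _ v (ltnSn _) vV (cnbhd_sub_refl v)).
elim: m u => // m IH u rank_u uV vu.
have [u_out|] := boolP (undominated G u).
  by exists u => //; apply: (cnbhd_subP _ vV vu); rewrite /cnbhd eqxx.
rewrite /undominated uV /= negbK => /hasP[u' u'V /andP[_ u'u]].
apply: (IH u') => //; first by have := dominates_rank u'V uV u'u; lia.
by apply: cnbhd_sub_trans vu _ => //; case/andP: u'u.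
Qed.

Lemma undominated_dominating : dominating G (output undominated G).
Proof.
split=> [x|v vV]; first by rewrite mem_filter => /andP[].
have [z z_out] := undominated_covers vV.
have z_in : z \in output undominated G by rewrite mem_filter z_out; case/andP: z_out.
by case/orP=> [/eqP ->|e]; [left | right; exists z].
Qed.

Lemma undominated_sub_eq v u : undominated G v -> u \in gV G ->
  cnbhd_sub G v u -> cnbhd_sub G u v.
Proof.
move=> v_out uV vu; have vV : v \in gV G by case/andP: v_out.
have [-> //|uv] := eqVneq u v; first exact: cnbhd_sub_refl.
have e : gE G v u by rewrite edge_sym; apply: cnbhd_sub_edge.
by have := undominatedP vV v_out u e; rewrite /dominates vu negb_or negbK => /andP[].
Qed.

(* Output vertices with the same closed neighbourhood are adjacent, and the
   identifier order makes one of them dominate the other. *)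
Lemma undominated_sub_inj v v' : undominated G v -> undominated G v' ->
  cnbhd_sub G v v' -> cnbhd_sub G v' v -> v = v'.
Proof.
move=> v_out v'_out vv' v'v.
have vV : v \in gV G by case/andP: v_out.
have v'V : v' \in gV G by case/andP: v'_out.
have [//|neq] := eqVneq v v'.
have e : gE G v v' by apply: cnbhd_sub_edge.
have := undominatedP vV v_out v' e; have := undominatedP v'V v'_out v.
rewrite edge_sym e /dominates vv' v'v /= => /(_ isT).
lia.
Qed.

End SimpleGraph.

Lemma view_edge (G G' : graph) r v u w : simple_graph G ->
  (forall x y, inball G r.+1 v x -> inball G r.+1 v y -> gE G x y = gE G' x y) ->
  inball G r v u -> gE G u w -> gE G' u w.
Proof.
move=> sG same_edges bu e.
by rewrite -same_edges //; [apply: inball_mono | exact: (inball_step sG bu e)].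
Qed.

Lemma cnbhd_sub_ext (G G' : graph) v u : simple_graph G -> simple_graph G' ->
  v \in gV G -> v \in gV G' -> cnbhd G v =1 cnbhd G' v -> cnbhd G u =1 cnbhd G' u ->
  cnbhd_sub G v u = cnbhd_sub G' v u.
Proof.
move=> sG sG' vV vV' Ev Eu.
apply/(cnbhd_subP sG _ vV)/(cnbhd_subP sG' _ vV') => sub w.
  by rewrite -Ev -Eu; apply: sub.
by rewrite Ev Eu; apply: sub.
Qed.

Lemma dominates_ext (G G' : graph) u v : simple_graph G -> simple_graph G' ->
  u \in gV G -> u \in gV G' -> v \in gV G -> v \in gV G' ->
  cnbhd G u =1 cnbhd G' u -> cnbhd G v =1 cnbhd G' v ->
  dominates G u v = dominates G' u v.
Proof.
move=> sG sG' uV uV' vV vV' Eu Ev.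
by rewrite /dominates !(cnbhd_sub_ext sG sG') // ?uV' ?vV'.
Qed.

Lemma undominated_local : local_in_rounds 2 undominated.
Proof.
move=> G G' v sG sG' vV vV' same_ball same_edges.
have same_edges' x y : inball G' 2 v x -> inball G' 2 v y -> gE G' x y = gE G x y.
  by rewrite -!same_ball => bx b_y; rewrite same_edges.
have fwd := view_edge sG same_edges; have bwd := view_edge sG' same_edges'.
have Ev : cnbhd G v =1 cnbhd G' v.
  move=> w; rewrite /cnbhd; congr orb.
  by apply/idP/idP; [apply: fwd | apply: bwd]; apply: inball_self.
have Eu u : gE G v u -> cnbhd G u =1 cnbhd G' u.
  move=> e w; have e' := fwd _ _ (inball_self 1 vV) e.
  rewrite /cnbhd; congr orb; apply/idP/idP; [apply: fwd | apply: bwd].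
    exact: (inball_step sG (inball_self 0 vV) e).
  exact: (inball_step sG' (inball_self 0 vV') e').
have Edom u : gE G v u -> dominates G u v = dominates G' u v.
  move=> e; have e' := fwd _ _ (inball_self 1 vV) e.
  exact: (dominates_ext sG sG' (edge_memr sG e) (edge_memr sG' e') vV vV' (Eu u e) Ev).
apply/(undominatedP sG vV)/(undominatedP sG' vV') => nodom u e.
  by rewrite -Edom ?nodom // (bwd _ _ (inball_self 1 vV') e).
by rewrite Edom ?nodom // (fwd _ _ (inball_self 1 vV) e).
Qed.

Section OuterplanarCount.

Variable G : graph.
Hypothesis G_simple : simple_graph G.
Variable s : seq nat.
Hypothesis s_perm : perm_eq s (gV G).
Hypothesis s_noncross : forall a b c d, gE G a b -> gE G c d ->
  ~ [/\ index a s < index c s, index c s < index b s & index b s < index d s].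
Variable D : seq nat.
Hypothesis D_sub : {subset D <= gV G}.
Variable L : nat -> nat.
Hypothesis L_in_D : forall v, v \in gV G -> L v \in D.
Hypothesis L_adj : forall v, v \in gV G -> L v != v -> gE G (L v) v.
Hypothesis L_fix : {in D, forall d, L d = d}.

Local Notation pos v := (index v s).
Local Notation vtx i := (nth 0 s i).
Local Notation label i := (L (nth 0 s i)).
Local Notation inside p q x :=
  ((pos p < pos x < pos q) || (pos q < pos x < pos p)).
Local Notation outside p q x :=
  ((pos x < minn (pos p) (pos q)) || (maxn (pos p) (pos q) < pos x)).

Definition boundary : seq nat :=
  [seq x <- gV G | (x \notin D) && has (fun y => gE G x y && (L y != L x)) (gV G)].

Lemma pos_lt v : v \in gV G -> pos v < size s.
Proof. by rewrite index_mem (perm_mem s_perm). Qed.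

Lemma vtx_mem i : i < size s -> vtx i \in gV G.
Proof. by rewrite -(perm_mem s_perm); apply: mem_nth. Qed.

Lemma pos_vtx i : i < size s -> pos (vtx i) = i.
Proof. by move=> lt; rewrite index_uniq // (perm_uniq s_perm); case: G_simple. Qed.

Lemma vtx_pos v : v \in gV G -> vtx (pos v) = v.
Proof. by rewrite -(perm_mem s_perm); apply: nth_index. Qed.

Lemma pos_inj u v : u \in gV G -> v \in gV G -> pos u = pos v -> u = v.
Proof. by move=> uV vV puv; rewrite -(vtx_pos uV) puv vtx_pos. Qed.

Lemma cnbhd_dominator v : v \in gV G -> cnbhd G (L v) v.
Proof.
by move=> vV; rewrite /cnbhd; case: (eqVneq v (L v)) => //= ne; rewrite L_adj // eq_sym.
Qed.

Lemma chords_cross p q r t : gE G p q -> gE G r t ->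
  inside p q r -> outside p q t -> False.
Proof.
have cross a b c d : gE G a b -> gE G c d ->
    pos a < pos c < pos b -> pos d < pos a \/ pos b < pos d -> False.
  move=> eab ecd /andP[ac cb] [da|bd].
    by apply: (s_noncross (_ : gE G d c) eab); [rewrite (edge_sym G_simple) | split].
  exact: (s_noncross eab ecd).
move=> epq ert /orP[r_in|r_in] t_out.
  by apply: (cross p q r t) => //; lia.
by apply: (cross q p r t) => //; [rewrite (edge_sym G_simple) | lia].
Qed.

(* The class of b is a star centred at b, so a chord avoiding b cannot
   separate two of its members. *)
Lemma class_one_side p q b v w : gE G p q -> b \in D -> p != b -> q != b ->
  v \in gV G -> w \in gV G -> L v = b -> L w = b ->
  inside p q v -> outside p q w -> False.
Proof.
move=> epq bD pb qb vV wV Lv Lw v_in w_out.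
have bV := D_sub bD.
have star x : x \in gV G -> L x = b -> x != b -> gE G b x.
  by move=> xV Lx xb; rewrite -Lx L_adj // Lx eq_sym.
have pb' := contra_neq (pos_inj (edge_meml G_simple epq) bV) pb.
have qb' := contra_neq (pos_inj (edge_memr G_simple epq) bV) qb.
have [b_in|b_out] := boolP (inside p q b).
  apply: (chords_cross epq (star w wV Lw _) b_in w_out).
  by apply: contraTneq w_out => ->; lia.
apply: (chords_cross epq (_ : gE G v b) v_in); last by lia.
rewrite (edge_sym G_simple) star //.
by apply: contraNneq b_out => <-.
Qed.

Lemma labels_noalt i j k l : i < j < k -> k < l < size s ->
  label i = label k -> label j = label l -> label i = label j.
Proof.
move=> /andP[ij jk] /andP[kl ls].
move Eb: (label i) => b; move Ec: (label j) => c => Ekb Elc.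
case: (eqVneq b c) => // bc; exfalso.
have vtxV m : m < size s -> vtx m \in gV G by apply: vtx_mem.
have [pi pj pk pl] :
    [/\ pos (vtx i) = i, pos (vtx j) = j, pos (vtx k) = k & pos (vtx l) = l].
  by split; apply: pos_vtx; lia.
have bD : b \in D by rewrite -Eb; apply/L_in_D/vtxV; lia.
have cD : c \in D by rewrite -Ec; apply/L_in_D/vtxV; lia.
have cb : c != b by rewrite eq_sym.
have not_b m : label m = c -> vtx m != b.
  by move=> Lm; apply: contra_neq cb => mb; rewrite -Lm mb L_fix.
have not_c m : m < size s -> label m = b -> pos c != m.
  by move=> ms Lm; apply: contra_neq bc => cm; rewrite -Lm -cm vtx_pos ?L_fix ?D_sub.
have edge_c m : m < size s -> label m = c -> pos c != m -> gE G c (vtx m).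
  move=> ms Lm cm; rewrite -{1}Lm L_adj ?vtxV // Lm.
  by apply: contraNneq cm => ->; rewrite pos_vtx.
have ci : pos c != i by apply: not_c Eb; lia.
have ck : pos c != k by apply: not_c (esym Ekb); lia.
have [c_left|c_ge] := ltnP (pos c) i.
  apply: (class_one_side (edge_c j _ Ec _) bD cb (not_b j Ec)
    (vtxV i _) (vtxV k _) Eb (esym Ekb)); rewrite ?pi ?pj ?pk; lia.
have [c_right|c_le] := ltnP k (pos c).
  apply: (class_one_side (edge_c j _ Ec _) bD cb (not_b j Ec)
    (vtxV k _) (vtxV i _) (esym Ekb) Eb); rewrite ?pi ?pj ?pk; lia.
apply: (class_one_side (edge_c l _ (esym Elc) _) bD cb (not_b l (esym Elc))
  (vtxV k _) (vtxV i _) (esym Ekb) Eb); rewrite ?pi ?pk ?pl; lia.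
Qed.

(* Otherwise the chord x y would separate the two neighbours of x in the
   order, both in the class of L x. *)
Lemma boundary_label_change x y : x \in gV G -> x \notin D -> gE G x y ->
  L y != L x -> 0 < pos x -> (pos x).+1 < size s ->
  label (pos x).-1 = L x -> label (pos x).+1 = L x -> False.
Proof.
move=> xV xD exy Lyx x_gt0 x_lt prev next.
have yV := edge_memr G_simple exy.
have bD := L_in_D xV.
have xb : x != L x by apply: contraNneq xD => ->.
have yb : y != L x by apply: contraNneq Lyx => ->; rewrite L_fix.
have prevV : vtx (pos x).-1 \in gV G by apply: vtx_mem; lia.
have nextV : vtx (pos x).+1 \in gV G by apply: vtx_mem.
have [pprev pnext] : pos (vtx (pos x).-1) = (pos x).-1 /\ pos (vtx (pos x).+1) = (pos x).+1.
  by split; apply: pos_vtx; lia.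
have yx : pos y != pos x.
  by apply/eqP=> /(pos_inj yV xV) yx; rewrite yx (edge_irrefl G_simple) in exy.
have y_next : pos y != (pos x).+1.
  by apply/eqP=> py; move: Lyx; rewrite -(vtx_pos yV) py next eqxx.
have y_prev : pos y != (pos x).-1.
  by apply/eqP=> py; move: Lyx; rewrite -(vtx_pos yV) py prev eqxx.
have [xy|yx'] := ltnP (pos x) (pos y).
  by apply: (class_one_side exy bD xb yb nextV prevV next prev); rewrite ?pprev ?pnext; lia.
by apply: (class_one_side exy bD xb yb prevV nextV prev next); rewrite ?pprev ?pnext; lia.
Qed.

Lemma size_boundary :
  size boundary <= (size (label_changes (fun i => label i) (size s))).*2.+2.
Proof.
set changes := label_changes _ _.
have -> : (size changes).*2.+2 = size [:: 0, (size s).-1 & changes ++ map succn changes].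
  by rewrite /= size_cat size_map addnn.
apply: (size_leq_inj (f := fun x => pos x)).
- by rewrite filter_uniq //; case: G_simple.
- by move=> x x'; rewrite !mem_filter => /andP[_ xV] /andP[_ x'V]; apply: pos_inj.
move=> x; rewrite mem_filter => /andP[/andP[xD /hasP[y _ /andP[exy Lyx]]] xV].
have xs := pos_lt xV; have Lx : label (pos x) = L x by rewrite vtx_pos.
rewrite !inE mem_cat; apply/or4P.
have [->|x_gt0] := posnP (pos x); first by constructor 1.
have [->|x_lt] := eqVneq (pos x) (size s).-1; first by constructor 2.
have [prev|prev] := eqVneq (label (pos x).-1) (L x); last first.
  constructor 4; apply/mapP; exists (pos x).-1; last by rewrite prednK.
  by rewrite mem_label_changes prednK // Lx prev; lia.
have [next|next] := eqVneq (label (pos x).+1) (L x).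
  by case: (boundary_label_change xV xD exy Lyx x_gt0 _ prev next); lia.
by constructor 3; rewrite mem_label_changes Lx eq_sym next andbT; lia.
Qed.

Lemma cnbhd_sub_dominator v : v \in gV G -> v \notin boundary -> cnbhd_sub G v (L v).
Proof.
move=> vV; rewrite mem_filter vV andbT negb_and negbK => /orP[vD|/hasPn same_label].
  by rewrite L_fix // cnbhd_sub_refl.
apply/(cnbhd_subP G_simple _ vV) => w /orP[/eqP-> |evw]; first exact: cnbhd_dominator.
have wV := edge_memr G_simple evw.
have := same_label w wV; rewrite evw negbK => /eqP <-.
exact: cnbhd_dominator.
Qed.

Lemma size_output_interior :
  size [seq v <- output undominated G | v \notin boundary] <= size D.
Proof.
apply: (size_leq_inj (f := L)).
- by rewrite !filter_uniq //; case: G_simple.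
- have same_nbhd x : undominated G x -> x \in gV G -> x \notin boundary ->
      cnbhd_sub G x (L x) /\ cnbhd_sub G (L x) x.
    move=> x_out xV xX; have xL := cnbhd_sub_dominator xV xX.
    by split=> //; apply: (undominated_sub_eq G_simple x_out (D_sub (L_in_D xV)) xL).
  have mem_interior x : x \in [seq v <- output undominated G | v \notin boundary] ->
      [/\ x \notin boundary, undominated G x & x \in gV G].
    by rewrite mem_filter => /andP[xX]; rewrite mem_filter => /andP[].
  move=> v v' /mem_interior[vX v_out vV] /mem_interior[v'X v'_out v'V] Lvv'.
  have LV := D_sub (L_in_D vV).
  have [vL Lv] := same_nbhd v v_out vV vX; have [v'L Lv'] := same_nbhd v' v'_out v'V v'X.
  rewrite -Lvv' in v'L Lv'.
  apply: (undominated_sub_inj G_simple v_out v'_out).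
    exact: (cnbhd_sub_trans G_simple vV LV vL Lv').
  exact: (cnbhd_sub_trans G_simple v'V LV v'L Lv).
- by move=> v; rewrite mem_filter => /andP[_]; rewrite mem_filter => /andP[_ /L_in_D].
Qed.

End OuterplanarCount.

Lemma size_undominated_output (G : graph) (D : seq nat) :
  simple_graph G -> outerplanar G -> dominating G D ->
  size (output undominated G) <= 8 * size D.
Proof.
move=> sG [s [s_perm s_noncross]] [D_sub D_dom].
have [D0|D_gt0] := posnP (size D).
  move/eqP: D0; rewrite size_eq0 => /eqP D0.
  rewrite /output; case E: (gV G) => [//|v V].
  have vV : v \in gV G by rewrite E mem_head.
  by case: (D_dom v vV) => [|[u]]; rewrite D0.
pose L v := if v \in D then v else nth 0 D (find (fun u => gE G u v) D).
have dominated v : v \in gV G -> v \notin D -> has (fun u => gE G u v) D.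
  move=> vV vD; case: (D_dom v vV) => [vD'|[u uD e]]; first by rewrite vD' in vD.
  by apply/hasP; exists u.
have L_in_D v : v \in gV G -> L v \in D.
  move=> vV; rewrite /L; case: ifP => // /negbT vD.
  by rewrite mem_nth // -has_find dominated.
have L_adj v : v \in gV G -> L v != v -> gE G (L v) v.
  move=> vV; rewrite /L; case: ifP => [_|/negbT vD _]; first by rewrite eqxx.
  exact: (nth_find 0 (dominated v vV vD)).
have L_fix : {in D, forall d, L d = d} by move=> d dD; rewrite /L dD.
have interior := size_output_interior sG D_sub L_in_D L_adj L_fix.
have bnd := size_boundary sG s_perm s_noncross D_sub L_in_D L_adj L_fix.
have changes : size (label_changes (fun i => L (nth 0 s i)) (size s)) <= (size D).*2.
  apply: size_label_changes => [i i_lt|]; first exact/L_in_D/(vtx_mem s_perm).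
  exact: (labels_noalt sG s_perm s_noncross D_sub L_in_D L_adj L_fix).
have on_boundary : size [seq v <- output undominated G | v \in boundary G D L] <=
    size (boundary G D L).
  apply: uniq_leq_size; first by rewrite !filter_uniq //; case: sG.
  by move=> v; rewrite mem_filter => /andP[].
have split_output : size (output undominated G) =
    size [seq v <- output undominated G | v \in boundary G D L] +
    size [seq v <- output undominated G | v \notin boundary G D L].
  rewrite -(count_predC (fun v => v \in boundary G D L) (output undominated G)).
  by rewrite !size_filter.
rewrite -!addnn in bnd changes; lia.
Qed.

Theorem theorem7 :
  forall eps : R, (0 < eps)%R ->
  exists (r : nat) (A : algorithm),
    local_in_rounds r A /\
    forall G : graph, simple_graph G -> outerplanar G ->
      dominating G (output A G) /\
      forall k : nat, domination_number G k ->
        (INR (size (output A G)) <= (8 + eps) * INR k)%R.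
Proof.
move=> eps eps_gt0; exists 2, undominated; split; first exact: undominated_local.
move=> G sG oG; split; first exact: undominated_dominating.
move=> k [[D [_ D_dom D_k]] _].
have : size (output undominated G) <= 8 * k.
  by rewrite -D_k; apply: size_undominated_output.
move=> /leP/le_INR; rewrite mult_INR (_ : INR 8 = 8%R); last by rewrite /=; ring.
have : (0 <= eps * INR k)%R by apply: Rmult_le_pos; [lra | apply: pos_INR].
lra.
Qed.
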